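(* Let $p\ge3$ be a prime and $d\in D_p$. (1) If $p=3$, then (a) $\binom{2d}{d}_{\#3}=\binom{3d}{d}_{\#3}$; (b) $\binom{2d+1}{d}_{\#3}=\binom{3d+2}{d}_{\#3}$; and for all integers $a$ with $0\le a\le 2d$: (c) $\big(\binom ad\binom{3d-a}{d}\big)_{\#3}\ge\binom{2d}{d}_{\#3}$; (d) $\big(\binom ad\binom{3d-1-a}{d}\big)_{\#3}\ge\binom{2d}{d}_{\#3}$; (e) $\big(\binom ad\binom{3d+1-a}{d+1}\big)_{\#3}\ge\binom{2d+1}{d}_{\#3}$. (2) If $p\ge5$, then (a) $\binom{2d}{d}_{\#p}=\binom{3d}{d}_{\#p}$; and for all integers $a$ with $0\le a\le 2d$: (b) $\big(\binom ad\binom{3d-a}{d}\big)_{\#p}\ge\binom{2d}d_{\#p}$; (c) $\big(\binom ad\binom{3d-1-a}{d}\big)_{\#p}\ge\binom{2d}d_{\#p}$; (d) $\big(\binom a{d-1}\binom{3d-2-a}{d}\big)_{\#p}\ge\binom{2d}d_{\#p}$.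
   Context: For an integer $M$ and prime $p$, $M_{\#p}=\sup\{k: p^k\mid M\}$ (so $0_{\#p}=\infty$); $\binom{m}{i}_{\#p}$ means $(\binom mi)_{\#p}$. For integers $m,i$: $\binom mi=\frac{m(m-1)\cdots(m-i+1)}{i!}$ if $i>0$, $1$ if $i=0$, $0$ if $i<0$. Sets $D_p$: $D_3$ is the smallest set of non-negative integers containing $0$ such that $d\in D_3$ implies $3d,3d+2\in D_3$. For a prime $p\ge5$, let $\pi_p$ be the largest integer with $\pi_p<p/3$; $D_p$ is the smallest set of non-negative integers containing $[0,\pi_p]\cap\mathbb Z$ such that for each $d\in D_p$, every non-negative integer in $[pd-\pi_p,pd+\pi_p]$ lies in $D_p$. *)

From HB Require Import structures.
From mathcomp Require Import all_boot all_order all_algebra.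
Set Implicit Arguments. Unset Strict Implicit. Unset Printing Implicit Defensive.
Import Order.TTheory GRing.Theory Num.Theory.

Definition binz (m i : int) : int :=
  match i with
  | Posz n => ((\prod_(k < n) (m - (k%:Z)))%R %/ (n`!)%:Z)%Z
  | Negz _ => 0%R
  end.

(* p-adic valuation M_{#p} = sup {k : p^k | M}, with 0_{#p} = infinity.
   None encodes infinity. For M <> 0 and p prime, the sup is logn p |M|. *)
Definition vp (p : nat) (M : int) : option nat :=
  if M == 0%R then None else Some (logn p `|M|%N).

Definition vge (x y : option nat) : bool :=
  match x, y with
  | None, _ => true
  | Some _, None => false
  | Some a, Some b => (b <= a)%N
  end.

Inductive D3 : nat -> Prop :=
  | D3_0 : D3 0
  | D3_mul d : D3 d -> D3 (3 * d)
  | D3_add d : D3 d -> D3 (3 * d + 2).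

(* pi_p = largest integer < p/3, i.e. floor((p-1)/3) *)
Definition pip (p : nat) : nat := p.-1 %/ 3.

Inductive Dge5 (p : nat) : nat -> Prop :=
  | Dge5_base k : (k <= pip p)%N -> Dge5 p k
  | Dge5_step d k : Dge5 p d -> (p * d - pip p <= k <= p * d + pip p)%N -> Dge5 p k.

Definition Dset (p : nat) (d : nat) : Prop :=
  if p == 3 then D3 d else Dge5 p d.

From HB Require Import structures.
From mathcomp Require Import all_boot all_order all_algebra zify.
Import Order.TTheory GRing.Theory Num.Theory.
Set Implicit Arguments. Unset Strict Implicit. Unset Printing Implicit Defensive.

(* By Kummer's theorem, the p-adic valuation of C(m + n, m) is the number of i >= 1 for which
   adding m and n carries modulo p^i, i.e. p^i <= m mod p^i + n mod p^i.  Every binomial in the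
   theorem has this form with m, n built from d, d +- 1 and a split of a multiple of d, so each
   (in)equality reduces, modulus by modulus, to an inequality between carry indicators that only
   depends on the residue r of d modulo q = p^i.  Elements of D_p have residues avoiding the
   middle third of [0, q) (3r < q or 2q <= 3r, with slightly stronger variants for p = 3 and for
   p >= 5, needed for the shifted binomials), and under that constraint each carry inequality is
   linear arithmetic. *)

Definition carry (q m n : nat) : bool := q <= m %% q + n %% q.

Lemma modnD_carry m n q : 0 < q -> m %% q + n %% q = (m + n) %% q + carry q m n * q.
Proof. by move=> q_gt0; rewrite modnD // /carry; case: leqP => /= h; lia. Qed.

Lemma logn_fact_sum p m B : prime p -> m < B -> logn p m`! = \sum_(1 <= i < B) m %/ p ^ i.
Proof.
move=> p_pr mB; rewrite logn_fact // [RHS](big_cat_nat (n := m.+1)) //=.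
rewrite [X in _ = _ + X]big1_seq ?addn0 // => i /andP[_].
rewrite mem_index_iota => /andP[mi _]; rewrite divn_small //.
by apply: leq_trans (ltn_expl _ (prime_gt1 p_pr)); apply: ltnW.
Qed.

Lemma logn_binD p m n B : prime p -> m + n < B ->
  logn p 'C(m + n, m) = \sum_(1 <= i < B) carry (p ^ i) m n.
Proof.
move=> p_pr mnB; have p_gt0 := prime_gt0 p_pr.
have := congr1 (logn p) (bin_fact (leq_addr n m)); rewrite addKn.
rewrite !lognM ?muln_gt0 ?fact_gt0 ?bin_gt0 ?leq_addr // !(@logn_fact_sum p _ B) //; try lia.
have -> : \sum_(1 <= i < B) (m + n) %/ p ^ i = \sum_(1 <= i < B) m %/ p ^ i +
    \sum_(1 <= i < B) n %/ p ^ i + \sum_(1 <= i < B) carry (p ^ i) m n.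
  by rewrite -!big_split; apply: eq_bigr => i _; rewrite divnD ?expn_gt0 ?p_gt0.
lia.
Qed.

Lemma logn_binD_eq p m n m' n' : prime p ->
  (forall i, 0 < i -> carry (p ^ i) m n = carry (p ^ i) m' n') ->
  logn p 'C(m + n, m) = logn p 'C(m' + n', m').
Proof.
move=> p_pr eq_carry; rewrite !(@logn_binD p _ _ (m + n + m' + n').+1) //; try lia.
by apply: eq_big_nat => i /andP[i_gt0 _]; rewrite eq_carry.
Qed.

Lemma logn_binD_le p m n m1 n1 m2 n2 : prime p ->
  (forall i, 0 < i -> carry (p ^ i) m n <= carry (p ^ i) m1 n1 + carry (p ^ i) m2 n2) ->
  logn p 'C(m + n, m) <= logn p 'C(m1 + n1, m1) + logn p 'C(m2 + n2, m2).
Proof.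
move=> p_pr le_carry; set B := (m + n + m1 + n1 + m2 + n2).+1.
rewrite !(@logn_binD p _ _ B) //; try lia.
rewrite -big_split big_nat_cond [X in _ <= X]big_nat_cond /=.
by apply: leq_sum => i /andP[/andP[i_gt0 _] _]; apply: le_carry.
Qed.

Definition avoids_middle_third (q r : nat) : bool := (3 * r < q) || (2 * q <= 3 * r).
Definition avoids_closed_middle_third (q r : nat) : bool := (3 * r < q) || (2 * q < 3 * r).
Definition D3_residue (q r : nat) : bool := (3 * r.+1 <= q) || (2 * q <= 3 * r) && (r.+2 != q).

Lemma D3_residue_avoids_middle_third q r : D3_residue q r -> avoids_middle_third q r.
Proof. rewrite /D3_residue /avoids_middle_third; lia. Qed.

Lemma avoids_closed_middle_thirdW q r :
  avoids_closed_middle_third q r -> avoids_middle_third q r.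
Proof. rewrite /avoids_closed_middle_third /avoids_middle_third; lia. Qed.

Section CarryAtModulus.
Variable q : nat.
Hypothesis q_gt1 : 1 < q.

Let q_gt0 : 0 < q. Proof. exact: ltnW. Qed.

(* Abstracting the residues first keeps lia from expanding every [_ %% q] into a
   Euclidean division with a nonlinear quotient term. *)
Ltac residue_lia :=
  repeat match goal with |- context [?m %% q] => move: (m %% q) => ? end; lia.

Lemma modn_succ_carry m : m %% q + 1 = m.+1 %% q + carry q m 1 * q.
Proof. by rewrite -{1}(modn_small q_gt1) modnD_carry // addn1. Qed.

Lemma carry_double d : avoids_middle_third q (d %% q) -> carry q d d = carry q d (d + d).
Proof.
move: (modnD_carry d d q_gt0) (ltn_pmod d q_gt0) (ltn_pmod (d + d) q_gt0).
rewrite /carry /avoids_middle_third; residue_lia.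
Qed.

Lemma carry_split d e f : avoids_middle_third q (d %% q) -> e + f = d ->
  carry q d d <= carry q d e + carry q d f.
Proof.
move=> + sum_ef; rewrite -{}sum_ef.
move: (modnD_carry e f q_gt0) (ltn_pmod e q_gt0) (ltn_pmod f q_gt0) (ltn_pmod (e + f) q_gt0).
rewrite /carry /avoids_middle_third; residue_lia.
Qed.

Lemma carry_split_pred d e f : 0 < d -> avoids_middle_third q (d %% q) -> e + f = d.-1 ->
  carry q d d <= carry q d e + carry q d f.
Proof.
move=> /prednK d_eq + sum_ef; rewrite -{}d_eq -{}sum_ef.
move: (modnD_carry e f q_gt0) (modn_succ_carry (e + f)) (ltn_pmod e q_gt0) (ltn_pmod f q_gt0).
move: (ltn_pmod (e + f) q_gt0) (ltn_pmod (e + f).+1 q_gt0).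
rewrite /carry /avoids_middle_third; residue_lia.
Qed.

Lemma carry_split_pred_pred d e f : 0 < d -> avoids_closed_middle_third q (d %% q) ->
  e + f = d.-1 -> carry q d d <= carry q d.-1 e + carry q d f.
Proof.
move=> /prednK d_eq + sum_ef; rewrite -{}d_eq -{}sum_ef /=.
move: (modnD_carry e f q_gt0) (modn_succ_carry (e + f)) (ltn_pmod e q_gt0) (ltn_pmod f q_gt0).
move: (ltn_pmod (e + f) q_gt0) (ltn_pmod (e + f).+1 q_gt0).
rewrite /carry /avoids_closed_middle_third; residue_lia.
Qed.

Lemma carry_succ_double d : D3_residue q (d %% q) -> carry q d d.+1 = carry q d (d.+1 + d.+1).
Proof.
move: (modnD_carry d.+1 d.+1 q_gt0) (modn_succ_carry d) (ltn_pmod d q_gt0) (ltn_pmod d.+1 q_gt0).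
move: (ltn_pmod (d.+1 + d.+1) q_gt0); rewrite /carry /D3_residue; residue_lia.
Qed.

Lemma carry_split_succ d e f : D3_residue q (d %% q) -> e + f = d ->
  carry q d d.+1 <= carry q d e + carry q d.+1 f.
Proof.
move=> + sum_ef; rewrite -{}sum_ef.
move: (modnD_carry e f q_gt0) (modn_succ_carry (e + f)) (ltn_pmod e q_gt0) (ltn_pmod f q_gt0).
move: (ltn_pmod (e + f) q_gt0) (ltn_pmod (e + f).+1 q_gt0).
rewrite /carry /D3_residue; residue_lia.
Qed.

End CarryAtModulus.

Lemma D3_residue_step q r : r < q -> (q == 1) || D3_residue q r ->
  D3_residue (3 * q) (3 * r) && D3_residue (3 * q) (3 * r + 2).
Proof. rewrite /D3_residue; lia. Qed.

Lemma D3_residues d : D3 d -> forall i, 0 < i -> D3_residue (3 ^ i) (d %% 3 ^ i).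
Proof.
elim=> [|{}d _ IHd|{}d _ IHd] [|i] // _; first by rewrite mod0n /D3_residue expnS; lia.
all: have r_lt : d %% 3 ^ i < 3 ^ i by rewrite ltn_pmod ?expn_gt0.
all: have prev : (3 ^ i == 1) || D3_residue (3 ^ i) (d %% 3 ^ i)
       by case: (posnP i) => [->|/IHd ->]; rewrite ?orbT.
all: have /andP[res3 res3D2] := D3_residue_step r_lt prev.
- by rewrite expnS -muln_modr.
- by rewrite expnS -modnDml -muln_modr modn_small //; lia.
Qed.

Lemma pip_lt p : 0 < p -> 3 * pip p < p.
Proof. rewrite /pip; move: (leq_divM p.-1 3); lia. Qed.

(* The residue of k modulo p q is p (d mod q) shifted by at most pip p < p / 3, so it stays
   on the same side of the middle third as d mod q. *)
Lemma avoids_closed_middle_third_step p q d k : 0 < q -> 3 * pip p < p ->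
  avoids_closed_middle_third q (d %% q) -> p * d - pip p <= k <= p * d + pip p ->
  avoids_closed_middle_third (p * q) (k %% (p * q)).
Proof.
move=> q_gt0 pip_small avoid_d k_near.
have Q_gt0 : 0 < p * q by rewrite muln_gt0 q_gt0 andbT; lia.
have mod_pd : (p * d) %% (p * q) = p * (d %% q) by rewrite muln_modr.
have scale m n : m < n -> p * m + p <= p * n by move=> /(leq_mul (leqnn p)); rewrite mulnS addnC.
have /scale r_lt := ltn_pmod d q_gt0; have := ltn_pmod k Q_gt0.
have r_pos : (d %% q == 0) || (p * 0 + p <= p * (d %% q)).
  by case: posnP => [//|/scale ->]; rewrite orbT.
have {}avoid_d : (p * (3 * (d %% q)) + p <= p * q) || (p * (2 * q) + p <= p * (3 * (d %% q))).
  by case/orP: avoid_d => /scale ->; rewrite ?orbT.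
rewrite /avoids_closed_middle_third; have [pd_le_k | k_lt_pd] := leqP (p * d) k.
- have := modnD_carry (p * d) (k - p * d) Q_gt0.
  rewrite subnKC // mod_pd (modn_small (m := k - p * d)); last by lia.
  rewrite /carry; move: (d %% q) (k %% (p * q)) r_pos r_lt avoid_d k_near => r w; lia.
- have := modnD_carry k (p * d - k) Q_gt0.
  rewrite (subnKC (ltnW k_lt_pd)) mod_pd (modn_small (m := p * d - k)); last by lia.
  rewrite /carry; move: (d %% q) (k %% (p * q)) r_pos r_lt avoid_d k_near => r w; lia.
Qed.

Lemma Dge5_residues p d : 0 < p -> Dge5 p d ->
  forall i, avoids_closed_middle_third (p ^ i) (d %% p ^ i).
Proof.
move=> p_gt0; have pip_small := pip_lt p_gt0.
elim=> [k k_small | {}d k _ IHd k_near] [|i]; rewrite ?expn0 ?modn1 // expnS.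
all: have q_gt0 : 0 < p ^ i by rewrite expn_gt0 p_gt0.
- apply: (@avoids_closed_middle_third_step p (p ^ i) 0) => //; last by lia.
  by rewrite mod0n /avoids_closed_middle_third muln0 q_gt0.
- exact: avoids_closed_middle_third_step (IHd i) k_near.
Qed.

Lemma binz_nat (m n : nat) : binz m n = 'C(m, n).
Proof.
rewrite /binz; have -> : (\prod_(k < n) (m%:Z - k%:Z) = (m ^_ n)%N)%R.
  elim: n => [|n IHn]; first by rewrite big_ord0 ffactn0.
  rewrite big_ord_recr /= IHn ffactnSr.
  have [n_le_m | m_lt_n] := leqP n m; first by rewrite subzn ?PoszM.
  by rewrite ffact_small // mul0r.
by rewrite -bin_ffact divz_nat mulnK ?fact_gt0.
Qed.

Lemma binz0 (m : int) : binz m 0 = 1%R.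
Proof. by rewrite /binz /= big_ord0. Qed.

Lemma binz1 (m : int) : binz m 1 = m.
Proof. by rewrite /binz /= big_ord1 subr0 divz1. Qed.

Lemma vp_nat p m : 0 < m -> vp p m = Some (logn p m).
Proof. by rewrite /vp; case: m. Qed.

Lemma vge_vp_mul p m1 m2 n : 0 < n ->
  (0 < m1 * m2 -> logn p n <= logn p m1 + logn p m2) ->
  vge (vp p (m1%:Z * m2%:Z)%R) (vp p n).
Proof.
move=> n_gt0 le_logn; rewrite -PoszM (vp_nat _ n_gt0).
have [m_eq0 | m_gt0] := posnP (m1 * m2); first by rewrite m_eq0.
rewrite vp_nat //=; move: m_gt0 (le_logn m_gt0); rewrite muln_gt0 => /andP[m1_gt0 m2_gt0].
by rewrite lognM.
Qed.

Lemma exp_gt1 m i : 1 < m -> 0 < i -> 1 < m ^ i.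
Proof. by move=> m_gt1 i_gt0; apply: leq_ltn_trans i_gt0 (ltn_expl _ m_gt1). Qed.

Section BinomialValuations.
Variables p d : nat.
Hypothesis p_pr : prime p.

Let pow_gt1 i : 0 < i -> 1 < p ^ i.
Proof. exact: exp_gt1 (prime_gt1 p_pr). Qed.

Let C2d_gt0 : 0 < 'C(2 * d, d). Proof. by rewrite bin_gt0 leq_pmull. Qed.

Section AvoidsMiddleThird.
Hypothesis avoid : forall i, 0 < i -> avoids_middle_third (p ^ i) (d %% p ^ i).

Lemma logn_bin_double_triple : logn p 'C(2 * d, d) = logn p 'C(3 * d, d).
Proof.
rewrite (_ : 2 * d = d + d) 1?(_ : 3 * d = d + (d + d)); try lia.
apply: logn_binD_eq => // i i_gt0.
by apply: carry_double; [exact: pow_gt1 | exact: avoid].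
Qed.

Lemma vp_bin_double_triple : vp p (binz (2 * d)%N d) = vp p (binz (3 * d)%N d).
Proof. by rewrite !binz_nat !vp_nat ?bin_gt0 ?leq_pmull // logn_bin_double_triple. Qed.

Lemma logn_bin_double_le a b : d <= a -> d <= b -> a + b = 3 * d ->
  logn p 'C(2 * d, d) <= logn p 'C(a, d) + logn p 'C(b, d).
Proof.
move=> d_le_a d_le_b sum_ab; rewrite -(subnKC d_le_a) -(subnKC d_le_b) mul2n -addnn.
apply: logn_binD_le => // i i_gt0.
by apply: carry_split; [exact: pow_gt1 | exact: avoid | lia].
Qed.

Lemma vp_bin_double_le a : a <= 2 * d ->
  vge (vp p (binz a d * binz (3 * d%:Z - a%:Z) d)%R) (vp p (binz (2 * d)%N d)).
Proof.
move=> a_le; have -> : (3 * d%:Z - a%:Z)%R = (3 * d - a)%N by lia.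
rewrite !binz_nat; apply: vge_vp_mul => //.
by rewrite muln_gt0 !bin_gt0 => /andP[d_le_a d_le_b]; apply: logn_bin_double_le => //; lia.
Qed.

Lemma logn_bin_double_le_pred a b : 0 < d -> d <= a -> d <= b -> a + b = (3 * d).-1 ->
  logn p 'C(2 * d, d) <= logn p 'C(a, d) + logn p 'C(b, d).
Proof.
move=> d_gt0 d_le_a d_le_b sum_ab; rewrite -(subnKC d_le_a) -(subnKC d_le_b) mul2n -addnn.
apply: logn_binD_le => // i i_gt0.
by apply: carry_split_pred; [exact: pow_gt1 | exact: d_gt0 | exact: avoid | lia].
Qed.

Lemma vp_bin_double_le_pred a : a <= 2 * d ->
  vge (vp p (binz a d * binz (3 * d%:Z - 1 - a%:Z) d)%R) (vp p (binz (2 * d)%N d)).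
Proof.
move=> a_le; have [d0 | d_gt0] := posnP d.
  by move: a_le; rewrite d0 leqn0 => /eqP->; rewrite !binz0 mulr1 /= leqnn.
have -> : (3 * d%:Z - 1 - a%:Z)%R = (3 * d - 1 - a)%N by lia.
rewrite !binz_nat; apply: vge_vp_mul => //.
by rewrite muln_gt0 !bin_gt0 => /andP[d_le_a d_le_b]; apply: logn_bin_double_le_pred => //; lia.
Qed.

End AvoidsMiddleThird.

Section AvoidsClosedMiddleThird.
Hypothesis avoid : forall i, avoids_closed_middle_third (p ^ i) (d %% p ^ i).

Lemma logn_bin_pred_le a b : 0 < d -> d.-1 <= a -> d <= b -> a + b = 3 * d - 2 ->
  logn p 'C(2 * d, d) <= logn p 'C(a, d.-1) + logn p 'C(b, d).
Proof.
move=> d_gt0 d_le_a d_le_b sum_ab; rewrite -(subnKC d_le_a) -(subnKC d_le_b) mul2n -addnn.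
apply: logn_binD_le => // i i_gt0.
by apply: carry_split_pred_pred; [exact: pow_gt1 | exact: d_gt0 | exact: avoid | lia].
Qed.

(* For d = 1 and a = 2 the second factor is binz (-1) 1 = -1, a unit, and the claim
   reduces to p not dividing C(2, 1) = 2. *)
Lemma vp_bin_pred_le a : 2 < p -> a <= 2 * d ->
  vge (vp p (binz a (d%:Z - 1) * binz (3 * d%:Z - 2 - a%:Z) d)%R) (vp p (binz (2 * d)%N d)).
Proof.
move=> p_gt2 a_le; have [-> | d_gt0] := posnP d; first by rewrite [binz _ _]/= mul0r.
have -> : (d%:Z - 1)%R = d.-1 by lia.
have [a_small | a_big] := leqP a (3 * d - 2).
  have -> : (3 * d%:Z - 2 - a%:Z)%R = (3 * d - 2 - a)%N by lia.
  rewrite !binz_nat; apply: vge_vp_mul => //.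
  by rewrite muln_gt0 !bin_gt0 => /andP[? ?]; apply: logn_bin_pred_le => //; lia.
have [-> ->] : d = 1 /\ a = 2 by lia.
by rewrite -[1.-1]/0 binz0 binz1 mul1r binz_nat bin1 vp_nat // lognE gtnNdvd ?andbF.
Qed.

End AvoidsClosedMiddleThird.

End BinomialValuations.

Section BinomialValuations3.
Variable d : nat.
Hypothesis D3_d : forall i, 0 < i -> D3_residue (3 ^ i) (d %% 3 ^ i).

Lemma logn3_bin_succ_double : logn 3 'C(2 * d + 1, d) = logn 3 'C(3 * d + 2, d).
Proof.
rewrite (_ : 2 * d + 1 = d + d.+1) 1?(_ : 3 * d + 2 = d + (d.+1 + d.+1)); try lia.
apply: logn_binD_eq => // i i_gt0.
by apply: carry_succ_double; [exact: exp_gt1 | exact: D3_d].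
Qed.

Lemma vp3_bin_succ_double : vp 3 (binz (2 * d + 1)%N d) = vp 3 (binz (3 * d + 2)%N d).
Proof. by rewrite !binz_nat !vp_nat ?bin_gt0 ?logn3_bin_succ_double //; lia. Qed.

Lemma logn3_bin_succ_le a b : d <= a -> d.+1 <= b -> a + b = 3 * d + 1 ->
  logn 3 'C(2 * d + 1, d) <= logn 3 'C(a, d) + logn 3 'C(b, d.+1).
Proof.
move=> d_le_a d_lt_b sum_ab; rewrite -(subnKC d_le_a) -(subnKC d_lt_b).
rewrite (_ : 2 * d + 1 = d + d.+1); last by lia.
apply: logn_binD_le => // i i_gt0.
by apply: carry_split_succ; [exact: exp_gt1 | exact: D3_d | lia].
Qed.

Lemma vp3_bin_succ_le a : a <= 2 * d ->
  vge (vp 3 (binz a d * binz (3 * d%:Z + 1 - a%:Z) d.+1)%R) (vp 3 (binz (2 * d + 1)%N d)).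
Proof.
move=> a_le; have -> : (3 * d%:Z + 1 - a%:Z)%R = (3 * d + 1 - a)%N by lia.
rewrite !binz_nat; apply: vge_vp_mul; first by rewrite bin_gt0; lia.
by rewrite muln_gt0 !bin_gt0 => /andP[? ?]; apply: logn3_bin_succ_le => //; lia.
Qed.

End BinomialValuations3.

Theorem theorem1p9 (p d : nat) (hp : prime p) (hp3 : (3 <= p)%N) (hd : Dset p d) :
  (p = 3 ->
     vp 3 (binz (2 * d)%N d) = vp 3 (binz (3 * d)%N d) /\
     vp 3 (binz (2 * d + 1)%N d) = vp 3 (binz (3 * d + 2)%N d) /\
     (forall a : nat, (a <= 2 * d)%N ->
        vge (vp 3 (binz a d * binz (3 * d%:Z - a%:Z) d)%R) (vp 3 (binz (2 * d)%N d)) /\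
        vge (vp 3 (binz a d * binz (3 * d%:Z - 1 - a%:Z) d)%R) (vp 3 (binz (2 * d)%N d)) /\
        vge (vp 3 (binz a d * binz (3 * d%:Z + 1 - a%:Z) (d.+1)%N)%R)
            (vp 3 (binz (2 * d + 1)%N d)))) /\
  ((5 <= p)%N ->
     vp p (binz (2 * d)%N d) = vp p (binz (3 * d)%N d) /\
     (forall a : nat, (a <= 2 * d)%N ->
        vge (vp p (binz a d * binz (3 * d%:Z - a%:Z) d)%R) (vp p (binz (2 * d)%N d)) /\
        vge (vp p (binz a d * binz (3 * d%:Z - 1 - a%:Z) d)%R) (vp p (binz (2 * d)%N d)) /\
        vge (vp p (binz a (d%:Z - 1) * binz (3 * d%:Z - 2 - a%:Z) d)%R)
            (vp p (binz (2 * d)%N d)))).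
Proof.
split=> [p3 | p_ge5].
- subst p; have D3_d := D3_residues hd.
  have avoid i (i_gt0 : 0 < i) := D3_residue_avoids_middle_third (D3_d i i_gt0).
  split; first exact: vp_bin_double_triple avoid.
  split; first exact: vp3_bin_succ_double.
  move=> a a_le; split; first exact: vp_bin_double_le.
  by split; [exact: vp_bin_double_le_pred | exact: vp3_bin_succ_le].
- have {}hd : Dge5 p d by move: hd; rewrite /Dset; case: eqP => // p3; lia.
  have avoid_closed := Dge5_residues (prime_gt0 hp) hd.
  have avoid i (_ : 0 < i) := avoids_closed_middle_thirdW (avoid_closed i).
  split; first exact: vp_bin_double_triple avoid.
  move=> a a_le; split; first exact: vp_bin_double_le.
  split; first exact: vp_bin_double_le_pred.
  by apply: vp_bin_pred_le => //; lia.
Qed.
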